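(* Let $(r,t,s)$ be a vertex of the Farey tree $\mathrm{F}\mathbb T$ with $t\in(0,\infty)\cap\mathbb Q$. Then: (1) If $r=\frac01$ and $s\neq\frac10$, and the symmetric decomposition of $\omega_s$ is $w\alpha w^{-1}$, then $\omega_t=yz\,w\alpha^{-1}w^{-1}$. (2) If $r\neq\frac01$ and $s=\frac10$, and the symmetric decomposition of $\omega_r$ is $u\beta u^{-1}$, then $\omega_t=u\beta^{-1}u^{-1}\,xy$. (3) If $r\neq\frac01$ and $s\neq\frac10$, and the symmetric decompositions of $\omega_r$ and $\omega_s$ are $u\beta u^{-1}$ and $w\alpha w^{-1}$ respectively, then $\omega_t=u\beta^{-1}u^{-1}\,xyz\,w\alpha^{-1}w^{-1}$. All equalities are equalities of words.
   Context: Farey tree $\mathrm{F}\mathbb T$: rooted planar binary tree with root $(\frac01,\frac11,\frac10)$, and each vertex $(\frac ab,\frac cd,\frac ef)$ has left child $(\frac ab,\frac{a+c}{b+d},\frac cd)$ and right child $(\frac cd,\frac{c+e}{d+f},\frac ef)$; $\frac10$ represents $\infty$. Modified lattice: the planar graph with vertex set $\mathbb Z^2$ whose edges are the horizontal unit segments, the vertical unit segments, and the diagonal segments of slope $-1$ joining $(i,j+1)$ and $(i+1,j)$. Words $\omega_t$: $\omega_{0/1}=x$, $\omega_{1/0}=z$. For reduced $t=p/q\in(0,\infty)$, let $L_t$ be the segment from $(0,0)$ to $(q,p)$, oriented from $(0,0)$ to $(q,p)$. List the edges whose relative interior meets $L_t$, in the order of the intersection points along $L_t$. A horizontal (resp.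 diagonal, vertical) edge contributes $x$ (resp. $y$, $z$) if its midpoint is not on the right-hand side of $L_t$ (including lying on $L_t$), and $x^{-1}$ (resp. $y^{-1}$, $z^{-1}$) if its midpoint is on the right-hand side. $\omega_t$ is the concatenation of these letters. Symmetric decomposition: every $\omega_t$ can be written as a word $w\alpha w^{-1}$ with $w$ a word and $\alpha\in\{x,y,z\}$ a letter; this expression is called the symmetric decomposition of $\omega_t$. *)

From HB Require Import structures.
From mathcomp Require Import all_boot all_order all_algebra.
Set Implicit Arguments. Unset Strict Implicit. Unset Printing Implicit Defensive.
Import Order.TTheory GRing.Theory Num.Theory.

(* A fraction a/b is the pair (a, b) (numerator, denominator); 1/0 = infinity. *)
Definition fracp := (nat * nat)%type.
Definition vertex := (fracp * fracp * fracp)%type.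

Definition mediant (f g : fracp) : fracp := (f.1 + g.1, f.2 + g.2)%N.

Definition farey_root : vertex := ((0, 1), (1, 1), (1, 0))%N.

Definition left_child (v : vertex) : vertex :=
  let: (a, c, e) := v in (a, mediant a c, c).
Definition right_child (v : vertex) : vertex :=
  let: (a, c, e) := v in (c, mediant c e, e).

Definition farey_at (path : seq bool) : vertex :=
  foldl (fun v b => if b then right_child v else left_child v) farey_root path.

Definition is_farey_vertex (v : vertex) : Prop := exists path, farey_at path = v.

Inductive gen := gx | gy | gz.
Definition gen_eqb (a b : gen) : bool :=
  match a, b with gx, gx | gy, gy | gz, gz => true | _, _ => false end.
Lemma gen_eqP : Equality.axiom gen_eqb.
Proof. by case; case; constructor. Qed.
HB.instance Definition _ := hasDecEq.Build gen gen_eqP.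
(* a letter: (generator, inverted?) ; (g, false) = g, (g, true) = g^{-1} *)
Definition letter := (gen * bool)%type.
Definition word := seq letter.
Definition inv_letter (l : letter) : letter := (l.1, ~~ l.2).
Definition winv (w : word) : word := rev (map inv_letter w).

(* An edge is (kind, (i, j)):
   (gx, (i,j)) : horizontal edge (i,j)--(i+1,j)
   (gy, (i,j)) : diagonal edge   (i,j+1)--(i+1,j)
   (gz, (i,j)) : vertical edge   (i,j)--(i,j+1)                       *)
Definition edge := (gen * (int * int))%type.

Local Open Scope ring_scope.

Definition edge_ends (e : edge) : (int * int) * (int * int) :=
  let: (k, (i, j)) := e in
  match k with
  | gx => ((i, j), (i + 1, j))
  | gy => ((i, j + 1), (i + 1, j))
  | gz => ((i, j), (i, j + 1))
  end.

(* L_t for t = p/q is the segment lam * (q, p), lam in [0,1].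
   [hits p q e lam] : the point lam*(q,p) of L_t lies in the relative
   interior of the edge e. *)
Definition hits (p q : nat) (e : edge) (lam : rat) : Prop :=
  let: ((x0, y0), (x1, y1)) := edge_ends e in
  exists mu : rat, [/\ 0 <= lam <= 1, 0 < mu < 1,
      lam * q%:R = x0%:~R + mu * (x1 - x0)%:~R &
      lam * p%:R = y0%:~R + mu * (y1 - y0)%:~R].

Definition meets (p q : nat) (e : edge) : Prop := exists lam, hits p q e lam.

(* The letter contributed by an edge: its kind, inverted iff the midpoint
   m of the edge is strictly on the right-hand side of L_t oriented from
   (0,0) to (q,p), i.e. det((q,p), m) < 0; we use 2m to stay in int. *)
Definition edge_letter (p q : nat) (e : edge) : letter :=
  let: ((x0, y0), (x1, y1)) := edge_ends e in
  (e.1, (q%:Z * (y0 + y1) - p%:Z * (x0 + x1) < 0)).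

Definition is_omega (t : fracp) (W : word) : Prop :=
  let p := t.1 in let q := t.2 in
  exists es : seq edge,
    [/\ (forall e, e \in es <-> meets p q e),
        (forall (i j : nat) (li lj : rat) (e0 : edge),
            (i < j < size es)%N ->
            hits p q (nth e0 es i) li -> hits p q (nth e0 es j) lj -> li < lj) &
        W = map (edge_letter p q) es].

From mathcomp Require Import all_boot all_order all_algebra.
From mathcomp Require Import zify ring lra.
Import Order.TTheory GRing.Theory Num.Theory.

(* Write r = a/b and s = c/d with bc - ad = 1, so that t = (a+c)/(b+d).  In
   the coordinates (U, V) of the lattice basis (d, c), (b, a) of Z^2, the
   sides of the lines carrying L_r, L_s and L_t are U, -V and U - V.  Hence L_t
   crosses, in this order, the edges crossed by L_r, the edges x, y, z at the
   corner (b, a) (x only when a > 0, z only when d > 0), and the translates of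
   the edges crossed by L_s.  The corner edges have their midpoints on the
   left of L_t; every other edge keeps its side, except the central edge of
   L_r (resp. L_s), whose midpoint lies on L_r (resp. L_s) and on the right of
   L_t.  The half-turn about the centre of L_r reverses its crossing sequence
   and its sides, which is why omega_r is symmetric with central letter beta;
   so passing to L_t exactly inverts that central letter. *)

Lemma size_sym_word (u : word) (b : letter) : size (u ++ b :: winv u) = (2 * size u).+1.
Proof. by rewrite size_cat /= size_rev size_map; lia. Qed.

Lemma inv_letterK : involutive inv_letter.
Proof. by case=> k b; rewrite /inv_letter negbK. Qed.

Lemma nth_sym_word (u : word) (b x0 : letter) m :
  m <= 2 * size u -> m != size u ->
  nth x0 (u ++ b :: winv u) (2 * size u - m) = inv_letter (nth x0 (u ++ b :: winv u) m).
Proof.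
have left_half k : k < size u ->
    nth x0 (u ++ b :: winv u) (2 * size u - k) = inv_letter (nth x0 u k).
  move=> k_lt; rewrite nth_cat ifN; last by rewrite -leqNgt; lia.
  have -> : 2 * size u - k - size u = (size u - k.+1).+1 by lia.
  rewrite /= /winv nth_rev size_map; last by lia.
  by rewrite (nth_map x0) (_ : size u - (size u - k.+1).+1 = k) //; lia.
move=> m_le m_neq; case: (ltnP m (size u)) => [m_lt | m_ge].
  by rewrite left_half // nth_cat m_lt.
have m'_lt : 2 * size u - m < size u by lia.
by rewrite -[in RHS](subKn m_le) (left_half _ m'_lt) inv_letterK nth_cat m'_lt.
Qed.

Lemma nth_sym_word_offcenter (u : word) (b c x0 : letter) m : m != size u ->
  nth x0 (u ++ b :: winv u) m = nth x0 (u ++ c :: winv u) m.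
Proof.
move=> m_neq; rewrite !nth_cat; case: ifP => // /negbT m_ge.
by have -> : m - size u = (m - size u).-1.+1 by lia.
Qed.

(* In an involution-symmetric sequence, the sign function [F] vanishes at the
   centre; the symmetric shape of the word forbids it to vanish elsewhere. *)
Lemma sym_word_flip_center (T : Type) (es : seq T) (f : T -> T) (F : T -> int)
    (K : T -> gen) (u : word) (beta : gen) :
  rev es = map f es -> (forall e, F (f e) = - F e)%R ->
  map (fun e => (K e, F e < 0)%R) es = u ++ (beta, false) :: winv u ->
  map (fun e => (K e, F e <= 0)%R) es = u ++ (beta, true) :: winv u.
Proof.
move=> rev_es F_odd word_es.
have size_es : size es = (2 * size u).+1.
  by rewrite -(size_map (fun e => (K e, F e < 0)%R)) word_es size_sym_word.
case: es size_es rev_es word_es => [//|e0 es'] size_es rev_es word_es.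
set es := e0 :: es' in size_es rev_es word_es *.
have nth_es m : m < size es -> nth e0 es (2 * size u - m) = f (nth e0 es m).
  by move=> m_lt; rewrite -(nth_map e0 e0 f m_lt) -rev_es nth_rev //; congr nth; lia.
have nth_word m : m < size es ->
    nth (gx, false) (u ++ (beta, false) :: winv u) m =
    (K (nth e0 es m), F (nth e0 es m) < 0)%R.
  by move=> m_lt; rewrite -word_es (nth_map e0).
apply: (@eq_from_nth _ (gx, false)).
  by rewrite size_map size_es size_sym_word.
move=> m; rewrite size_map => m_lt; rewrite (nth_map e0) //.
have [m_eq | m_neq] := eqVneq m (size u).
  subst m.
  have F_center : F (nth e0 es (size u)) = 0%R.
    have := F_odd (nth e0 es (size u)); rewrite -nth_es; last by lia.
    rewrite mul2n -addnn addnK; lia.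
  move: (nth_word _ m_lt); rewrite !nth_cat ltnn subnn F_center ltxx lexx /=.
  by case=> ->.
have F_neq0 : F (nth e0 es m) != 0%R.
  apply/eqP=> F0; have m_le : m <= 2 * size u by rewrite -ltnS -size_es.
  have m'_lt : 2 * size u - m < size es by lia.
  have := nth_sym_word u (beta, false) (gx, false) m m_le m_neq.
  by rewrite nth_word // nth_word // nth_es // F_odd F0 oppr0 ltxx.
rewrite le_eqVlt (negbTE F_neq0) -(nth_sym_word_offcenter _ (beta, false)) //.
by rewrite nth_word.
Qed.

Local Open Scope ring_scope.

(* [side P Q X Y] is positive iff (X, Y) lies strictly to the left of the
   line through (0, 0) and (Q, P). *)
Definition side (P Q X Y : int) : int := Y * Q - X * P.

Lemma side_addX P Q X Y x : side P Q (X + x) Y = side P Q X Y - x * P.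
Proof. rewrite /side; ring. Qed.

Lemma side_addY P Q X Y y : side P Q X (Y + y) = side P Q X Y + y * Q.
Proof. rewrite /side; ring. Qed.

(* The segment from (0, 0) to (Q, P) meets the edge [e] at its point of
   parameter [crossing_num e / crossing_den P Q e.1]: the crossing point
   has ordinate j, abscissa i, or coordinate sum i + j + 1. *)
Definition crossing_num (e : edge) : int :=
  let: (k, (i, j)) := e in
  match k with gx => j | gy => i + j + 1 | gz => i end.

Definition crossing_den (P Q : int) (k : gen) : int :=
  match k with gx => P | gy => P + Q | gz => Q end.

Definition crosses (P Q : int) (e : edge) : bool :=
  let: (k, (i, j)) := e in
  match k with
  | gx => (0 <= j <= P) && (0 < side P Q i j) && (side P Q (i + 1) j < 0)
  | gy => (0 <= i + j + 1 <= P + Q) && (0 < side P Q i (j + 1))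
            && (side P Q (i + 1) j < 0)
  | gz => (0 <= i <= Q) && (side P Q i j < 0) && (0 < side P Q i (j + 1))
  end.

Definition crosses_before (P Q : int) (e1 e2 : edge) : bool :=
  crossing_num e1 * crossing_den P Q e2.1 < crossing_num e2 * crossing_den P Q e1.1.

Definition crossing_seq (P Q : int) (es : seq edge) : Prop :=
  (forall e, (e \in es) = crosses P Q e) /\ pairwise (crosses_before P Q) es.

Definition mid_side (P Q : int) (e : edge) : int :=
  let: ((x0, y0), (x1, y1)) := edge_ends e in side P Q x0 y0 + side P Q x1 y1.

Definition side_letter (P Q : int) (e : edge) : letter := (e.1, mid_side P Q e < 0).

Lemma crossing_den_gt0 P Q k : 0 < P -> 0 < Q -> 0 < crossing_den P Q k.
Proof. by case: k => /=; lia. Qed.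

Lemma crossing_num_range P Q e :
  0 < P -> 0 < Q -> crosses P Q e -> 0 < crossing_num e < crossing_den P Q e.1.
Proof.
move=> P_gt0 Q_gt0; have PQ_gt0 : 0 < P + Q by lia.
have between (M x y : int) : 0 < M -> x * M < y * M -> y * M < (x + 1) * M -> False.
  by move=> M_gt0; rewrite !ltr_pM2r //; lia.
case: e => [[] [i j]]; rewrite /= /side => /andP[/andP[/andP[lo hi] l] r].
- have : j != 0 by apply/eqP=> j0; apply: (between P i 0); nia.
  have : j != P by apply/eqP=> jP; apply: (between P i Q); nia.
  lia.
- have : i + j + 1 != 0 by apply/eqP=> s0; apply: (between (P + Q) i 0); nia.
  have : i + j + 1 != P + Q by apply/eqP=> sPQ; apply: (between (P + Q) i Q); nia.
  lia.
- have : i != 0 by apply/eqP=> i0; apply: (between Q j 0); nia.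
  have : i != Q by apply/eqP=> iQ; apply: (between Q j P); nia.
  lia.
Qed.

Definition crossing_param (P Q : int) (e : edge) : rat :=
  (crossing_num e)%:~R / (crossing_den P Q e.1)%:~R.

Lemma frac_ltE (n1 d1 n2 d2 : int) : 0 < d1 -> 0 < d2 ->
  (n1 * d2 < n2 * d1) = (n1%:~R / d1%:~R < n2%:~R / d2%:~R :> rat).
Proof.
move=> d1_gt0 d2_gt0.
by rewrite ltr_pdivrMr ?ltr0z // mulrAC ltr_pdivlMr ?ltr0z // -!intrM ltr_int.
Qed.

Lemma crosses_beforeE P Q e1 e2 : 0 < P -> 0 < Q ->
  crosses_before P Q e1 e2 = (crossing_param P Q e1 < crossing_param P Q e2).
Proof. by move=> P_gt0 Q_gt0; rewrite /crosses_before frac_ltE ?crossing_den_gt0. Qed.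

Lemma crosses_before_trans P Q : 0 < P -> 0 < Q -> transitive (crosses_before P Q).
Proof. by move=> P_gt0 Q_gt0 e2 e1 e3; rewrite !crosses_beforeE //; apply: lt_trans. Qed.

Lemma crosses_before_irr P Q : irreflexive (crosses_before P Q).
Proof. by move=> e; rewrite /crosses_before ltxx. Qed.

Lemma hits_gx (p q : nat) i j lam : (0 : rat) < p%:R -> (0 : rat) < q%:R ->
  hits p q (gx, (i, j)) lam <->
  [/\ 0 <= j <= p, i * p < j * q, j * q < (i + 1) * p & lam * p%:R = j%:~R].
Proof.
move=> p_gt0 q_gt0.
rewrite /hits /= -(ler0z rat) -(ler_int rat) -!(ltr_int rat) !rmorphM /=.
rewrite [i + 1 - i]addrAC !subrr add0r !(intrD, rmorph1, rmorph0, pmulrn).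
split=> [[mu [/andP[l0 l1] /andP[m0 m1] E1 E2]] | [/andP[c0 c1] h1 h2 E]].
- by split; try apply/andP; try split; nra.
- by exists (lam * q%:R - i%:~R); split; try apply/andP; try split; nra.
Qed.

Lemma hits_gy (p q : nat) i j lam : (0 : rat) < p%:R -> (0 : rat) < q%:R ->
  hits p q (gy, (i, j)) lam <->
  [/\ 0 <= i + j + 1 <= p + q, i * p < (j + 1) * q, j * q < (i + 1) * p
    & lam * (p%:Z + q%:Z)%:~R = (i + j + 1)%:~R].
Proof.
move=> p_gt0 q_gt0.
rewrite /hits /= -(ler0z rat) -(ler_int rat) -!(ltr_int rat) !rmorphM /=.
rewrite [i + 1 - i]addrAC subrr add0r opprD addNKr.
rewrite !(intrD, rmorphN, rmorph1, pmulrn, natrD).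
split=> [[mu [/andP[l0 l1] /andP[m0 m1] E1 E2]] | [/andP[c0 c1] h1 h2 E]].
- by split; try apply/andP; try split; nra.
- by exists (lam * q%:R - i%:~R); split; try apply/andP; try split; nra.
Qed.

Lemma hits_gz (p q : nat) i j lam : (0 : rat) < p%:R -> (0 : rat) < q%:R ->
  hits p q (gz, (i, j)) lam <->
  [/\ 0 <= i <= q, j * q < i * p, i * p < (j + 1) * q & lam * q%:R = i%:~R].
Proof.
move=> p_gt0 q_gt0.
rewrite /hits /= -(ler0z rat) -(ler_int rat) -!(ltr_int rat) !rmorphM /=.
rewrite [j + 1 - j]addrAC !subrr add0r !(intrD, rmorph1, rmorph0, pmulrn).
split=> [[mu [/andP[l0 l1] /andP[m0 m1] E1 E2]] | [/andP[c0 c1] h1 h2 E]].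
- by split; try apply/andP; try split; nra.
- by exists (lam * p%:R - j%:~R); split; try apply/andP; try split; nra.
Qed.

Lemma hitsE (p q : nat) e lam : (0 < p)%N -> (0 < q)%N ->
  hits p q e lam <->
  crosses p q e /\ lam * (crossing_den p q e.1)%:~R = (crossing_num e)%:~R.
Proof.
move=> p_gt0 q_gt0; have p_gt0' : (0 : rat) < p%:R by rewrite ltr0n.
have q_gt0' : (0 : rat) < q%:R by rewrite ltr0n.
case: e => [[] [i j]]; rewrite /= /side ?hits_gx ?hits_gy ?hits_gz //;
  split=> [[/andP[? ?] ? ? ->] | [/andP[/andP[/andP[? ?] ? ?] ->]]]; split=> //; lia.
Qed.

Lemma meets_crosses (p q : nat) e : (0 < p)%N -> (0 < q)%N ->
  meets p q e <-> crosses p q e.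
Proof.
move=> p_gt0 q_gt0; split=> [[lam /hitsE[] //] | cr].
have den_gt0 : (0 : rat) < (crossing_den p q e.1)%:~R.
  by rewrite ltr0z crossing_den_gt0 //; lia.
exists (crossing_param p q e).
by apply/hitsE => //; rewrite divfK ?gt_eqF.
Qed.

Lemma hits_param (p q : nat) e lam : (0 < p)%N -> (0 < q)%N ->
  hits p q e lam -> lam = crossing_param p q e.
Proof.
move=> p_gt0 q_gt0 /hitsE[] // _; rewrite /crossing_param => <-.
by rewrite mulfK // gt_eqF // ltr0z crossing_den_gt0 //; lia.
Qed.

Lemma hits_ltE {p q : nat} {e1 e2 : edge} {l1 l2 : rat} :
  (0 < p)%N -> (0 < q)%N ->
  hits p q e1 l1 -> hits p q e2 l2 -> (l1 < l2) = crosses_before p q e1 e2.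
Proof.
move=> p_gt0 q_gt0 /hits_param -> // /hits_param -> //.
by rewrite crosses_beforeE //; lia.
Qed.

Lemma edge_letterE (p q : nat) e : edge_letter p q e = side_letter p q e.
Proof.
by case: e => [[] [i j]]; rewrite /edge_letter /side_letter /mid_side /side /=;
  congr (_, _ < 0); ring.
Qed.

Lemma is_omegaE (p q : nat) W : (0 < p)%N -> (0 < q)%N ->
  is_omega (p, q) W <-> exists es, crossing_seq p q es /\ W = map (side_letter p q) es.
Proof.
move=> p_gt0 q_gt0; have e0 : edge := (gx, (0, 0)).
have letters es : map (edge_letter p q) es = map (side_letter p q) es.
  by apply: eq_map => e; rewrite edge_letterE.
split=> [[es [mem_es sorted_es ->]] | [es [[mem_es sorted_es] ->]]]; exists es.
- split=> //; split=> [e|].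
    by apply/idP/idP=> [/mem_es /meets_crosses | /meets_crosses /mem_es]; apply.
  apply/(pairwiseP e0) => i j i_lt j_lt ij.
  have [li hi] : meets p q (nth e0 es i) by apply/mem_es/mem_nth.
  have [lj hj] : meets p q (nth e0 es j) by apply/mem_es/mem_nth.
  by rewrite -(hits_ltE p_gt0 q_gt0 hi hj); apply: (sorted_es i j li lj e0); rewrite ?ij.
- split=> // [e | i j li lj e1 /andP[ij j_lt] hi hj].
    by rewrite mem_es meets_crosses.
  rewrite (hits_ltE p_gt0 q_gt0 hi hj); apply: (pairwiseP e1 sorted_es) => //.
  exact: ltn_trans j_lt.
Qed.

(* The action on edges of the point reflection (X, Y) |-> (Q - X, P - Y),
   which reverses the segment from (0, 0) to (Q, P). *)
Definition reflect_edge (P Q : int) (e : edge) : edge :=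
  let: (k, (i, j)) := e in
  match k with
  | gx => (gx, (Q - 1 - i, P - j))
  | gy => (gy, (Q - 1 - i, P - 1 - j))
  | gz => (gz, (Q - i, P - 1 - j))
  end.

Section Reflection.
Variables P Q : int.

Lemma reflect_edge_kind e : (reflect_edge P Q e).1 = e.1.
Proof. by case: e => [[] [i j]]. Qed.

Lemma reflect_edgeK : involutive (reflect_edge P Q).
Proof. by case=> [[] [i j]] /=; congr (_, (_, _)); ring. Qed.

Lemma crosses_reflect e : crosses P Q (reflect_edge P Q e) = crosses P Q e.
Proof. by case: e => [[] [i j]]; rewrite /= /side; apply/idP/idP; lia. Qed.

Lemma crossing_num_reflect e :
  crossing_num (reflect_edge P Q e) = crossing_den P Q e.1 - crossing_num e.
Proof. by case: e => [[] [i j]] /=; ring. Qed.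

Lemma crosses_before_reflect e1 e2 :
  crosses_before P Q (reflect_edge P Q e1) (reflect_edge P Q e2) = crosses_before P Q e2 e1.
Proof.
by rewrite /crosses_before !crossing_num_reflect !reflect_edge_kind; apply/idP/idP; nia.
Qed.

Lemma mid_side_reflect e : mid_side P Q (reflect_edge P Q e) = - mid_side P Q e.
Proof. by case: e => [[] [i j]]; rewrite /mid_side /side /=; ring. Qed.

Lemma crossing_seq_rev es : 0 < P -> 0 < Q -> crossing_seq P Q es ->
  rev es = map (reflect_edge P Q) es.
Proof.
move=> P_gt0 Q_gt0 [mem_es sorted_es].
have lt_trans := crosses_before_trans P Q P_gt0 Q_gt0.
have sorted_es' : sorted (crosses_before P Q) es by rewrite (sorted_pairwise lt_trans).
apply: (@irr_sorted_eq _ (fun e1 e2 => crosses_before P Q e2 e1)).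
- by move=> e2 e1 e3 h12 h23; exact: lt_trans h23 h12.
- exact: crosses_before_irr P Q.
- by rewrite rev_sorted.
- rewrite sorted_map; apply: sub_sorted sorted_es' => e1 e2 /=.
  by rewrite crosses_before_reflect.
- move=> e; rewrite mem_rev -{2}(reflect_edgeK e) (mem_map (inv_inj reflect_edgeK)).
  by rewrite !mem_es crosses_reflect.
Qed.

End Reflection.

Definition translate (X Y : int) (e : edge) : edge := (e.1, (e.2.1 + X, e.2.2 + Y)).

Lemma translateK X Y : cancel (translate X Y) (translate (- X) (- Y)).
Proof. by case=> k [i j]; rewrite /translate /=; congr (_, (_, _)); ring. Qed.

Lemma translateKV X Y : cancel (translate (- X) (- Y)) (translate X Y).
Proof. by case=> k [i j]; rewrite /translate /=; congr (_, (_, _)); ring. Qed.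

Lemma crosses_horizontal Q e : 0 < Q -> crosses 0 Q e = false.
Proof.
case: e => [[] [i j]] Q_gt0; rewrite /= /side !mulr0 !subr0 ?pmulr_lgt0 ?pmulr_llt0 //;
  apply/negbTE; lia.
Qed.

Lemma crosses_vertical P e : 0 < P -> crosses P 0 e = false.
Proof.
case: e => [[] [i j]] P_gt0; rewrite /= /side !mulr0 !sub0r ?oppr_gt0 ?oppr_lt0;
  rewrite ?pmulr_lgt0 ?pmulr_llt0 //; apply/negbTE; lia.
Qed.

Lemma crossing_seq_horizontal Q : 0 < Q -> crossing_seq 0 Q [::].
Proof. by move=> Q_gt0; split=> // e; rewrite in_nil crosses_horizontal. Qed.

Lemma crossing_seq_vertical P : 0 < P -> crossing_seq P 0 [::].
Proof. by move=> P_gt0; split=> // e; rewrite in_nil crosses_vertical. Qed.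

Section Mediant.
Variables A B C D : int.
Hypotheses (A_ge0 : 0 <= A) (B_ge0 : 0 <= B) (C_ge0 : 0 <= C) (D_ge0 : 0 <= D).
Hypothesis unimodular : B * C - A * D = 1.

Fact B_C_ge1 : 1 <= B /\ 1 <= C.
Proof. nia. Qed.

Lemma lattice_coords i j : exists U V, i = D * U + B * V /\ j = C * U + A * V.
Proof.
exists (j * B - i * A), (i * C - j * D).
by split; rewrite -[LHS]mulr1 -unimodular; ring.
Qed.

Lemma side_left U V : side A B (D * U + B * V) (C * U + A * V) = U.
Proof. by rewrite /side -[RHS]mulr1 -unimodular; ring. Qed.

Lemma side_right U V : side C D (D * U + B * V) (C * U + A * V) = - V.
Proof. by rewrite /side -[RHS]mulr1 -unimodular; ring. Qed.

Lemma side_mediant U V : side (A + C) (B + D) (D * U + B * V) (C * U + A * V) = U - V.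
Proof. by rewrite /side -[RHS]mulr1 -unimodular; ring. Qed.

(* The crossing point of L_{(A+C)/(B+D)} with [e] lies strictly below, resp.
   strictly to the right of, the corner (B, A). *)
Definition below_corner (e : edge) : bool :=
  crossing_num e * (A + C) < A * crossing_den (A + C) (B + D) e.1.

Definition right_of_corner (e : edge) : bool :=
  B * crossing_den (A + C) (B + D) e.1 < crossing_num e * (B + D).

Lemma below_cornerE e : 1 <= A ->
  below_corner e = (crossing_num e < crossing_den A B e.1).
Proof.
have [B_ge1 C_ge1] := B_C_ge1.
case: e => [[] [i j]] A_ge1; rewrite /below_corner /=;
  [rewrite ltr_pM2r | apply/idP/idP..]; nia.
Qed.

Lemma crosses_left e : 1 <= A ->
  crosses A B e = crosses (A + C) (B + D) e && below_corner e.
Proof.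
move=> A_ge1; rewrite below_cornerE //; have [B_ge1 C_ge1] := B_C_ge1.
apply/idP/idP.
- move=> cr; have := crossing_num_range A B e (ltac:(lia)) (ltac:(lia)) cr; move: cr.
  case: e => [[] [i j]] /=; rewrite ?side_addX ?side_addY;
    have [U [V [-> ->]]] := lattice_coords i j; rewrite ?side_left ?side_mediant; nia.
- case/andP=> cr lt.
  have := crossing_num_range (A + C) (B + D) e (ltac:(lia)) (ltac:(lia)) cr; move: cr lt.
  case: e => [[] [i j]] /=; rewrite ?side_addX ?side_addY;
    have [U [V [-> ->]]] := lattice_coords i j; rewrite ?side_left ?side_mediant; nia.
Qed.

Lemma right_of_cornerE e : 1 <= D ->
  right_of_corner (translate B A e) = (0 < crossing_num e).
Proof.
have [B_ge1 C_ge1] := B_C_ge1.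
case: e => [[] [i j]] D_ge1; rewrite /right_of_corner /=;
  [apply/idP/idP.. | rewrite ltr_pM2r]; nia.
Qed.

Lemma crosses_right e : 1 <= D ->
  crosses C D e =
  crosses (A + C) (B + D) (translate B A e) && right_of_corner (translate B A e).
Proof.
move=> D_ge1; rewrite right_of_cornerE //; have [B_ge1 C_ge1] := B_C_ge1.
apply/idP/idP.
- move=> cr; have := crossing_num_range C D e (ltac:(lia)) (ltac:(lia)) cr; move: cr.
  case: e => [[] [i j]] /=; rewrite ?side_addX ?side_addY;
    have [U [V [-> ->]]] := lattice_coords i j; rewrite ?side_right ?side_mediant; nia.
- case/andP=> cr lt.
  have := crossing_num_range (A + C) (B + D) _ (ltac:(lia)) (ltac:(lia)) cr; move: cr lt.
  case: e => [[] [i j]] /=; rewrite ?side_addX ?side_addY;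
    have [U [V [-> ->]]] := lattice_coords i j; rewrite ?side_right ?side_mediant; nia.
Qed.

Definition is_corner_edge (e : edge) : bool :=
  match e.1 with
  | gx => (1 <= A) && (e.2 == (B - 1, A))
  | gy => e.2 == (B - 1, A)
  | gz => (1 <= D) && (e.2 == (B, A))
  end.

Definition corner_edges : seq edge :=
  (if 1 <= A then [:: (gx, (B - 1, A))] else [::]) ++
  (gy, (B - 1, A)) :: (if 1 <= D then [:: (gz, (B, A))] else [::]).

Lemma mem_corner_edges e : (e \in corner_edges) = is_corner_edge e.
Proof.
case: e => [k [i j]]; rewrite /corner_edges /is_corner_edge mem_cat.
by case: (1 <= A); case: (1 <= D); case: k; rewrite !inE /= ?xpair_eqE ?orbF ?andbF.
Qed.

Lemma crosses_corner e :
  crosses (A + C) (B + D) e && ~~ below_corner e && ~~ right_of_corner e = is_corner_edge e.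
Proof.
have [B_ge1 C_ge1] := B_C_ge1.
case: e => [[] [i j]];
  rewrite /below_corner /right_of_corner /is_corner_edge /= xpair_eqE /side.
- apply/idP/idP=> [/andP[/andP[cr ?] ?] | /andP[? /andP[/eqP-> /eqP->]]]; last by nia.
  have := crossing_num_range (A + C) (B + D) (gx, (i, j)) (ltac:(lia)) (ltac:(lia)) cr.
  move: cr; rewrite /= /side => cr ?.
  have j_eq : j = A by nia.
  subst j; have i_eq : i = B - 1 by nia.
  by subst i; rewrite !eqxx andbT; lia.
- apply/idP/idP=> [/andP[/andP[cr ?] ?] | /andP[/eqP-> /eqP->]]; last by nia.
  have := crossing_num_range (A + C) (B + D) (gy, (i, j)) (ltac:(lia)) (ltac:(lia)) cr.
  move: cr; rewrite /= /side => cr ?.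
  have s_eq : i + j + 1 = A + B by nia.
  have i_eq : i = B - 1 by nia.
  have j_eq : j = A by lia.
  by subst i j; rewrite !eqxx.
- apply/idP/idP=> [/andP[/andP[cr ?] ?] | /andP[? /andP[/eqP-> /eqP->]]]; last by nia.
  have := crossing_num_range (A + C) (B + D) (gz, (i, j)) (ltac:(lia)) (ltac:(lia)) cr.
  move: cr; rewrite /= /side => cr ?.
  have i_eq : i = B by nia.
  subst i; have j_eq : j = A by nia.
  by subst j; rewrite !eqxx andbT; nia.
Qed.

Lemma mid_side_left e : 1 <= A -> crosses A B e ->
  (mid_side (A + C) (B + D) e < 0) = (mid_side A B e <= 0).
Proof.
move=> A_ge1 cr; have [B_ge1 C_ge1] := B_C_ge1.
have := crossing_num_range A B e (ltac:(lia)) (ltac:(lia)) cr; move: cr.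
case: e => [[] [i j]]; rewrite /mid_side /=; rewrite ?side_addX ?side_addY;
  have [U [V [-> ->]]] := lattice_coords i j; rewrite ?side_left ?side_mediant;
  move=> ? ?; apply/idP/idP; nia.
Qed.

Lemma mid_side_right e : 1 <= D -> crosses C D e ->
  (mid_side (A + C) (B + D) (translate B A e) < 0) = (mid_side C D e <= 0).
Proof.
move=> D_ge1 cr; have [B_ge1 C_ge1] := B_C_ge1.
have := crossing_num_range C D e (ltac:(lia)) (ltac:(lia)) cr; move: cr.
case: e => [[] [i j]]; rewrite /mid_side /=; rewrite ?side_addX ?side_addY;
  have [U [V [-> ->]]] := lattice_coords i j; rewrite ?side_right ?side_mediant;
  move=> ? ?; apply/idP/idP; nia.
Qed.

Lemma mid_side_corner e : is_corner_edge e ->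
  (mid_side (A + C) (B + D) e < 0) = false.
Proof.
have [B_ge1 C_ge1] := B_C_ge1.
case: e => [[] [i j]]; rewrite /is_corner_edge /mid_side /side /= xpair_eqE.
- by case/andP=> [? /andP[/eqP-> /eqP->]]; apply/negbTE; nia.
- by case/andP=> [/eqP-> /eqP->]; apply/negbTE; nia.
- by case/andP=> [? /andP[/eqP-> /eqP->]]; apply/negbTE; nia.
Qed.

Lemma crosses_before_left e1 e2 : 1 <= A -> crosses A B e1 -> crosses A B e2 ->
  crosses_before A B e1 e2 -> crosses_before (A + C) (B + D) e1 e2.
Proof.
move=> A_ge1 /(crossing_num_range A B _ (ltac:(lia)) (ltac:(lia))) r1.
move=> /(crossing_num_range A B _ (ltac:(lia)) (ltac:(lia))) r2.
have [B_ge1 C_ge1] := B_C_ge1.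
move: r1 r2; rewrite /crosses_before; case: e1 e2 => [[] [i1 j1]] [[] [i2 j2]] /=; nia.
Qed.

Lemma crosses_before_right e1 e2 : 1 <= D -> crosses C D e1 -> crosses C D e2 ->
  crosses_before C D e1 e2 ->
  crosses_before (A + C) (B + D) (translate B A e1) (translate B A e2).
Proof.
move=> D_ge1 /(crossing_num_range C D _ (ltac:(lia)) (ltac:(lia))) r1.
move=> /(crossing_num_range C D _ (ltac:(lia)) (ltac:(lia))) r2.
have [B_ge1 C_ge1] := B_C_ge1.
move: r1 r2; rewrite /crosses_before; case: e1 e2 => [[] [i1 j1]] [[] [i2 j2]] /=; nia.
Qed.

Lemma crossing_seq_left es : crossing_seq A B es ->
  (forall e, (e \in es) = crosses (A + C) (B + D) e && below_corner e) /\
  pairwise (crosses_before (A + C) (B + D)) es.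
Proof.
have [B_ge1 C_ge1] := B_C_ge1.
case=> mem_es sorted_es; have [A0 | A_ge1] : A = 0 \/ 1 <= A by lia.
  have -> : es = [::].
    case: es mem_es {sorted_es} => // e es /(_ e).
    by rewrite mem_head A0 crosses_horizontal.
  split=> // e; apply/esym/negbTE/nandP; case cr: (crosses _ _ e); [right | by left].
  have := crossing_num_range (A + C) (B + D) e (ltac:(lia)) (ltac:(lia)) cr.
  by rewrite /below_corner A0; nia.
split=> [e | ]; first by rewrite mem_es crosses_left.
apply: (sub_in_pairwise (P := mem es)) sorted_es; last by apply/allP.
by move=> e1 e2; rewrite !mem_es; exact: crosses_before_left.
Qed.

Lemma crossing_seq_right fs : crossing_seq C D fs ->
  (forall e,
     (e \in map (translate B A) fs) = crosses (A + C) (B + D) e && right_of_corner e) /\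
  pairwise (crosses_before (A + C) (B + D)) (map (translate B A) fs).
Proof.
have [B_ge1 C_ge1] := B_C_ge1.
case=> mem_fs sorted_fs; have [D0 | D_ge1] : D = 0 \/ 1 <= D by lia.
  have -> : fs = [::].
    case: fs mem_fs {sorted_fs} => // e fs /(_ e).
    by rewrite mem_head D0 crosses_vertical.
  split=> // e; apply/esym/negbTE/nandP; case cr: (crosses _ _ e); [right | by left].
  have := crossing_num_range (A + C) (B + D) e (ltac:(lia)) (ltac:(lia)) cr.
  by rewrite /right_of_corner D0; nia.
split=> [e | ].
  rewrite -{1}(translateKV B A e) (mem_map (can_inj (translateK B A))) mem_fs.
  by rewrite crosses_right // translateKV.
rewrite pairwise_map; apply: (sub_in_pairwise (P := mem fs)) sorted_fs; last by apply/allP.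
by move=> e1 e2; rewrite !mem_fs; exact: crosses_before_right.
Qed.

Lemma corner_edges_sorted : pairwise (crosses_before (A + C) (B + D)) corner_edges.
Proof.
have [B_ge1 C_ge1] := B_C_ge1.
rewrite /corner_edges; case: (1 <= A); case: (1 <= D);
  by rewrite /= /crosses_before /= ?andbT; nia.
Qed.

Lemma below_cornerP e : below_corner e =
  (crossing_param (A + C) (B + D) e < A%:~R / (A + C)%:~R).
Proof.
have [B_ge1 C_ge1] := B_C_ge1.
by rewrite /below_corner frac_ltE ?crossing_den_gt0 //; lia.
Qed.

Lemma right_of_cornerP e : right_of_corner e =
  (B%:~R / (B + D)%:~R < crossing_param (A + C) (B + D) e).
Proof.
have [B_ge1 C_ge1] := B_C_ge1.
by rewrite /right_of_corner frac_ltE ?crossing_den_gt0 //; lia.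
Qed.

Lemma corner_params : A%:~R / (A + C)%:~R < B%:~R / (B + D)%:~R :> rat.
Proof. have [B_ge1 C_ge1] := B_C_ge1; rewrite -frac_ltE; nia. Qed.

Lemma crossing_seq_mediant es fs : crossing_seq A B es -> crossing_seq C D fs ->
  crossing_seq (A + C) (B + D) (es ++ corner_edges ++ map (translate B A) fs).
Proof.
move=> /crossing_seq_left[mem_es sorted_es] /crossing_seq_right[mem_fs sorted_fs].
have [P_gt0 Q_gt0] : 0 < A + C /\ 0 < B + D by have := B_C_ge1; lia.
split=> [e|].
  rewrite (mem_cat e es) (mem_cat e corner_edges) mem_es mem_fs.
  rewrite mem_corner_edges -crosses_corner.
  by case: (crosses _ _ e); case: (below_corner e); case: (right_of_corner e).
have corner_lt := corner_params.
rewrite pairwise_cat (pairwise_cat _ corner_edges) sorted_es sorted_fs.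
rewrite corner_edges_sorted allrel_catr /= !andbT.
apply/andP; split; [apply/andP; split|]; apply/allrelP => e1 e2;
  rewrite ?mem_es ?mem_fs ?mem_corner_edges -?crosses_corner crosses_beforeE //.
- case/andP=> _; rewrite below_cornerP => lt1 /andP[/andP[_]].
  by rewrite below_cornerP -leNgt => le2 _; apply: lt_le_trans le2.
- case/andP=> _; rewrite below_cornerP => lt1 /andP[_].
  by rewrite right_of_cornerP => lt2; apply: lt_trans lt2; apply: lt_trans corner_lt.
- case/andP=> _; rewrite right_of_cornerP -leNgt => le1 /andP[_].
  by rewrite right_of_cornerP => lt2; apply: le_lt_trans lt2.
Qed.

Lemma side_letters_left es u beta : 1 <= A -> crossing_seq A B es ->
  map (side_letter A B) es = u ++ (beta, false) :: winv u ->
  map (side_letter (A + C) (B + D)) es = u ++ (beta, true) :: winv u.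
Proof.
move=> A_ge1 cs word_es; have [B_ge1 C_ge1] := B_C_ge1.
have rev_es := crossing_seq_rev A B es (ltac:(lia)) (ltac:(lia)) cs.
rewrite -(sym_word_flip_center _ es _ _ (fun e => e.1) u beta rev_es
  (mid_side_reflect A B) word_es).
apply/eq_in_map => e e_in; congr (_, _); apply: mid_side_left => //.
by rewrite -cs.1.
Qed.

Lemma side_letters_right fs w alpha : 1 <= D -> crossing_seq C D fs ->
  map (side_letter C D) fs = w ++ (alpha, false) :: winv w ->
  map (side_letter (A + C) (B + D)) (map (translate B A) fs) = w ++ (alpha, true) :: winv w.
Proof.
move=> D_ge1 cs word_fs; have [B_ge1 C_ge1] := B_C_ge1.
have rev_fs := crossing_seq_rev C D fs (ltac:(lia)) (ltac:(lia)) cs.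
rewrite -map_comp -(sym_word_flip_center _ fs _ _ (fun e => e.1) w alpha rev_fs
  (mid_side_reflect C D) word_fs).
apply/eq_in_map => e e_in; congr (_, _); apply: mid_side_right => //.
by rewrite -cs.1.
Qed.

Lemma corner_letters : map (side_letter (A + C) (B + D)) corner_edges =
  (if 1 <= A then [:: (gx, false)] else [::]) ++
  (gy, false) :: (if 1 <= D then [:: (gz, false)] else [::]).
Proof.
have -> : map (side_letter (A + C) (B + D)) corner_edges =
          map (fun e => (e.1, false)) corner_edges.
  by apply/eq_in_map => e; rewrite mem_corner_edges /side_letter => /mid_side_corner ->.
by rewrite /corner_edges; case: (1 <= A); case: (1 <= D).
Qed.

End Mediant.

Local Close Scope ring_scope.

Lemma farey_vertexP {r t s : fracp} : is_farey_vertex (r, t, s) ->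
  t = mediant r s /\ r.2 * s.1 = r.1 * s.2 + 1.
Proof.
case=> path; rewrite /farey_at.
have : farey_root.1.2 = mediant farey_root.1.1 farey_root.2 /\
  farey_root.1.1.2 * farey_root.2.1 = farey_root.1.1.1 * farey_root.2.2 + 1 by [].
elim: path farey_root => [v inv /= v_eq | b path IH [[r' t'] s'] /= [-> unimod]].
  by move: inv; rewrite v_eq.
by apply: IH; case: b; rewrite /mediant /=; split=> //; lia.
Qed.

Section FareyMediant.
Context {a b c d : nat}.
Hypothesis unimodular : b * c = a * d + 1.

Definition corner_word : word :=
  (if 0 < a then [:: (gx, false)] else [::]) ++
  (gy, false) :: (if 0 < d then [:: (gz, false)] else [::]).

Lemma is_omega_mediant {es fs Wl Wr} :
  crossing_seq a b es -> crossing_seq c d fs ->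
  map (side_letter (a + c) (b + d)) es = Wl ->
  map (side_letter (a + c) (b + d)) (map (translate b a) fs) = Wr ->
  is_omega (mediant (a, b) (c, d)) (Wl ++ corner_word ++ Wr).
Proof.
move=> cs_es cs_fs <- <-.
have unimodular_int : (b%:Z * c%:Z - a%:Z * d%:Z = 1)%R by lia.
apply/is_omegaE; [rewrite /=; nia.. |].
exists (es ++ corner_edges a b d ++ map (translate b a) fs); rewrite /= !PoszD.
split; first by apply: crossing_seq_mediant.
by rewrite map_cat (map_cat _ (corner_edges _ _ _)) (corner_letters a b c d).
Qed.

Lemma left_num_gt0 : (a, b) <> (0, 1) -> 0 < a.
Proof.
move=> r_ne; rewrite lt0n; apply: contra_notN r_ne => /eqP a0.
by move: unimodular; rewrite a0 mul0n => /eqP; rewrite muln_eq1 => /andP[/eqP-> _].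
Qed.

Lemma right_den_gt0 : (c, d) <> (1, 0) -> 0 < d.
Proof.
move=> s_ne; rewrite lt0n; apply: contra_notN s_ne => /eqP d0.
by move: unimodular; rewrite d0 muln0 => /eqP; rewrite muln_eq1 => /andP[_ /eqP->].
Qed.

Lemma mediant_left_word {u beta} :
  0 < a -> is_omega (a, b) (u ++ (beta, false) :: winv u) ->
  exists2 es, crossing_seq a b es &
    map (side_letter (a + c) (b + d)) es = u ++ (beta, true) :: winv u.
Proof.
move=> a_gt0 /is_omegaE[]; [by [] | nia | move=> es [cs_es word_es]].
have unimodular_int : (b%:Z * c%:Z - a%:Z * d%:Z = 1)%R by lia.
exists es => //; rewrite !PoszD.
by apply: side_letters_left; rewrite ?lez_nat.
Qed.

Lemma mediant_right_word {w alpha} :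
  0 < d -> is_omega (c, d) (w ++ (alpha, false) :: winv w) ->
  exists2 fs, crossing_seq c d fs &
    map (side_letter (a + c) (b + d)) (map (translate b a) fs) = w ++ (alpha, true) :: winv w.
Proof.
move=> d_gt0 /is_omegaE[]; [nia | by [] | move=> fs [cs_fs word_fs]].
have unimodular_int : (b%:Z * c%:Z - a%:Z * d%:Z = 1)%R by lia.
exists fs => //; rewrite !PoszD.
by apply: side_letters_right; rewrite ?lez_nat.
Qed.

End FareyMediant.

Theorem proposition3p9 (r t s : fracp)
  (Hv : is_farey_vertex (r, t, s)) (Ht : (0 < t.1)%N /\ (0 < t.2)%N) :
  [/\
    (* (1) *)
    (r = (0, 1)%N -> s <> (1, 0)%N ->
      forall (w : word) (alpha : gen),
        is_omega s (w ++ (alpha, false) :: winv w) ->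
        is_omega t ([:: (gy, false); (gz, false)] ++ w ++ (alpha, true) :: winv w)),
    (* (2) *)
    (r <> (0, 1)%N -> s = (1, 0)%N ->
      forall (u : word) (beta : gen),
        is_omega r (u ++ (beta, false) :: winv u) ->
        is_omega t ((u ++ (beta, true) :: winv u) ++ [:: (gx, false); (gy, false)]))
  & (* (3) *)
    (r <> (0, 1)%N -> s <> (1, 0)%N ->
      forall (u w : word) (alpha beta : gen),
        is_omega r (u ++ (beta, false) :: winv u) ->
        is_omega s (w ++ (alpha, false) :: winv w) ->
        is_omega t ((u ++ (beta, true) :: winv u)
                    ++ [:: (gx, false); (gy, false); (gz, false)]
                    ++ (w ++ (alpha, true) :: winv w)))].
Proof.
have [-> unimod] := farey_vertexP Hv; clear Hv Ht.
case: r s unimod => [a b] [c d] /= unimod.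
split.
- move=> [a0 b1] s_ne w alpha; subst a b.
  case/(mediant_right_word unimod (right_den_gt0 unimod s_ne)) => fs cs_fs word_fs.
  have := is_omega_mediant unimod (crossing_seq_horizontal 1 erefl) cs_fs erefl word_fs.
  by rewrite /corner_word (right_den_gt0 unimod s_ne).
- move=> r_ne [c1 d0] u beta; subst c d.
  case/(mediant_left_word unimod (left_num_gt0 unimod r_ne)) => es cs_es word_es.
  have := is_omega_mediant unimod cs_es (crossing_seq_vertical 1 erefl) word_es erefl.
  by rewrite /corner_word (left_num_gt0 unimod r_ne).
- move=> r_ne s_ne u w alpha beta.
  case/(mediant_left_word unimod (left_num_gt0 unimod r_ne)) => es cs_es word_es.
  case/(mediant_right_word unimod (right_den_gt0 unimod s_ne)) => fs cs_fs word_fs.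
  have := is_omega_mediant unimod cs_es cs_fs word_es word_fs.
  by rewrite /corner_word (left_num_gt0 unimod r_ne) (right_den_gt0 unimod s_ne).
Qed.
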